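(* Let $(A,\varphi,\phi_A,[\cdot,\cdot]_A,a_A,K,\langle\cdot,\cdot\rangle)$ be a para-Kähler hom-Lie algebroid with hom-Levi-Civita connection $\nabla$, and identify $A^{-1}$ with $(A^1)^*$ via $\langle\cdot,\cdot\rangle$ (so $\phi_{A^{-1}}$ corresponds to $\phi_{(A^1)^*}:=(\phi_{A^1})^\dagger$). Then: (i) $X\mapsto\nabla_X|_{\Gamma(A^1)}$, $X\in\Gamma(A^1)$, is a representation of the hom-Lie algebroid $A^1$ on $(A^1,\varphi,\phi_{A^1})$ with respect to $\phi_{A^1}$; (ii) $\alpha\mapsto\nabla_\alpha|_{\Gamma((A^1)^* )}$, $\alpha\in\Gamma((A^1)^* )\cong\Gamma(A^{-1})$, is a representation of the hom-Lie algebroid $(A^1)^*\cong A^{-1}$ on $((A^1)^*,\varphi,\phi_{(A^1)^*})$ with respect to $\phi_{(A^1)^*}$.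
   Context: Standing conventions. $M$ is a smooth manifold, $\varphi:M\to M$ a diffeomorphism, $\varphi^*f=f\circ\varphi$. A hom-bundle $(A\to M,\varphi,\phi_A)$ is a vector bundle $A\to M$ together with an invertible $\mathbb R$-linear map $\phi_A:\Gamma(A)\to\Gamma(A)$ with $\phi_A(fX)=\varphi^*(f)\phi_A(X)$. $\varphi^!TM$ is the pullback bundle; its sections are identified with $\mathbb R$-linear maps $D:C^\infty(M)\to C^\infty(M)$ with $D(fg)=D(f)\varphi^*(g)+\varphi^*(f)D(g)$. A hom-Lie algebroid $(A,\varphi,\phi_A,[\cdot,\cdot]_A,a_A)$ consists of a hom-bundle, a skew-symmetric $\mathbb R$-bilinear bracket on $\Gamma(A)$ with $\phi_A[X,Y]_A=[\phi_A X,\phi_A Y]_A$ and $[\phi_A(X),[Y,Z]_A]_A+[\phi_A(Y),[Z,X]_A]_A+[\phi_A(Z),[X,Y]_A]_A=0$, and a bundle map $a_A:A\to\varphi^!TM$ such that $[X,fY]_A=\varphi^*(f)[X,Y]_A+a_A(\phi_A(X))(f)\phi_A(Y)$, $\varphi^*\circ a_A(X)=a_A(\phi_A(X))\circ\varphi^*$, and $a_A([X,Y]_A)\circ\varphi^*=a_A(\phi_AX)\circ a_A(Y)-a_A(\phi_AY)\circ a_A(X)$. For a hom-bundle $(E,\varphi,\phi_E)$, $\phi_E^\dagger$ on $\Gamma(E^* )$ is $\langle\phi_E^\dagger\xi,e\rangle=\varphi^*\langle\xi,\phi_E^{-1}e\rangle$. Pseudo-Riemannian metric: a symmetric nondegenerate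 bilinear form $\langle\cdot,\cdot\rangle$ on $A$ with $\langle\phi_AX,\phi_AY\rangle=\varphi^*\langle X,Y\rangle$. The hom-Levi-Civita connection is the unique $\mathbb R$-bilinear $\nabla:\Gamma(A)\times\Gamma(A)\to\Gamma(A)$ with $\nabla_{fX}Y=\varphi^*(f)\nabla_XY$, $\nabla_X(fY)=\varphi^*(f)\nabla_XY+a_A(\phi_AX)(f)\phi_A(Y)$, $[X,Y]_A=\nabla_XY-\nabla_YX$, and $a_A(\phi_AX)\langle Y,Z\rangle=\langle\nabla_XY,\phi_AZ\rangle+\langle\phi_AY,\nabla_XZ\rangle$. An almost para-complex structure is an invertible map $K:\Gamma(A)\to\Gamma(A)$ with $(\phi_A\circ K)^2=\mathrm{Id}$, $\phi_A\circ K=K\circ\phi_A$, and such that $A^1=\ker(\phi_A\circ K-\mathrm{Id})$ and $A^{-1}=\ker(\phi_A\circ K+\mathrm{Id})$ have the same rank. $(K,\langle\cdot,\cdot\rangle)$ is almost para-Hermitian if $\langle(\phi_A\circ K)X,(\phi_A\circ K)Y\rangle=-\langle X,Y\rangle$. A para-Kähler hom-Lie algebroid is an almost para-Hermitian hom-Lie algebroid with $\nabla_X\phi_A(KY)=\phi_A(K(\nabla_XY))$ for all $X,Y$. In this situation $A^1$ and $A^{-1}$ are $\phi_A$-invariant, closed under $[\cdot,\cdot]_A$ and $\nabla$, and are hom-Lie algebroids with the restricted structures; $A^{-1}\to(A^1)^*$, $\bar X\mapsto\langle\bar X,\cdot\rangle|_{A^1}$ is an isomorphism. Representation: given a hom-Lie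 algebroid $B$, a hom-bundle $(E,\varphi,\phi_E)$ and invertible $\mu:\Gamma(E)\to\Gamma(E)$ with $\mu(fe)=\varphi^*(f)\mu(e)$, a representation of $B$ on $E$ w.r.t. $\mu$ is an assignment $X\mapsto\rho(X)$ of $\mathbb R$-linear maps $\Gamma(E)\to\Gamma(E)$, with $\rho(fX)=\varphi^*(f)\rho(X)$, such that $\rho(X)(fe)=\varphi^*(f)\rho(X)e+a_B(\phi_B(X))(f)\mu(e)$, $\rho(\phi_B(X))\circ\mu=\mu\circ\rho(X)$, and $\rho([X,Y]_B)\circ\mu=\rho(\phi_B(X))\circ\rho(Y)-\rho(\phi_B(Y))\circ\rho(X)$. *)

(* Algebraic (sections-level) model of hom-Lie algebroids:
   - k        : the scalar field (plays the role of R, the real numbers);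
   - R        : a commutative k-algebra (plays the role of C^oo(M));
   - V        : an R-module (plays the role of Gamma(A));
   - phiS     : R -> R  (plays the role of the pullback phi^* by the diffeo phi);
   - sections of phi^! TM are phi-derivations R -> R;
   - the anchor is a : V -> (R -> R). *)
From HB Require Import structures.
From mathcomp Require Import all_boot all_order all_algebra.
Set Implicit Arguments. Unset Strict Implicit. Unset Printing Implicit Defensive.
Import GRing.Theory Num.Theory.
Local Open Scope ring_scope.

(* k-linearity ("R-linear" in the paper, R = real numbers) of a map on sections *)
Definition klinear (k : numFieldType) (R : comAlgType k) (V : lmodType R)
  (F : V -> V) : Prop :=
  (forall x y : V, F (x + y) = F x + F y) /\
  (forall (c : k) (x : V), F ((c%:A : R) *: x) = (c%:A : R) *: F x).

(* phi^* : C^oo(M) -> C^oo(M), pullback by a diffeomorphism: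
   an invertible k-algebra endomorphism *)
Definition is_pullback (k : numFieldType) (R : comAlgType k) (phiS : R -> R) : Prop :=
  (((forall f g : R, phiS (f + g) = phiS f + phiS g)) /\
     ((forall f g : R, phiS (f * g) = phiS f * phiS g)) /\
     (phiS 1 = 1) /\
     ((forall (c : k) (f : R), phiS (c *: f) = c *: phiS f)) /\
     (bijective phiS)).

Definition is_phi_derivation (k : numFieldType) (R : comAlgType k)
  (phiS : R -> R) (D : R -> R) : Prop :=
  (((forall f g : R, D (f + g) = D f + D g)) /\
     ((forall (c : k) (f : R), D (c *: f) = c *: D f)) /\
     ((forall f g : R, D (f * g) = D f * phiS g + phiS f * D g))).

Definition is_hom_bundle (k : numFieldType) (R : comAlgType k) (V : lmodType R)
  (phiS : R -> R) (phiA : V -> V) : Prop :=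
  ((bijective phiA) /\
     (klinear phiA) /\
     ((forall (f : R) (X : V), phiA (f *: X) = phiS f *: phiA X))).

Definition is_hom_Lie_algebroid (k : numFieldType) (R : comAlgType k) (V : lmodType R)
  (phiS : R -> R) (phiA : V -> V) (br : V -> V -> V) (a : V -> R -> R) : Prop :=
  ((is_hom_bundle phiS phiA) /\
     (
      (forall X, klinear (br X)) /\ (forall Y, klinear (fun X => br X Y))) /\
     ((forall X Y, br X Y = - br Y X)) /\
     ((forall X Y, phiA (br X Y) = br (phiA X) (phiA Y))) /\
     (
      (forall X Y Z, br (phiA X) (br Y Z) + br (phiA Y) (br Z X)
                     + br (phiA Z) (br X Y) = 0)) /\
     (
      (((forall X Y f, a (X + Y) f = a X f + a Y f)) /\
     ((forall (g : R) X f, a (g *: X) f = g * a X f)) /\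
     ((forall X, is_phi_derivation phiS (a X))))) /\
     ((forall X (f : R) Y, br X (f *: Y) = phiS f *: br X Y + a (phiA X) f *: phiA Y)) /\
     ((forall X f, phiS (a X f) = a (phiA X) (phiS f))) /\
     ((forall X Y f, a (br X Y) (phiS f) = a (phiA X) (a Y f) - a (phiA Y) (a X f)))).

Definition is_pseudo_metric (k : numFieldType) (R : comAlgType k) (V : lmodType R)
  (phiS : R -> R) (phiA : V -> V) (g : V -> V -> R) : Prop :=
  (((forall X Y Z, g (X + Y) Z = g X Z + g Y Z)) /\
     ((forall (f : R) X Y, g (f *: X) Y = f * g X Y)) /\
     ((forall X Y, g X Y = g Y X)) /\
     ((forall X, (forall Y, g X Y = 0) -> X = 0)) /\
     ((forall l : V -> R, (forall Y Z, l (Y + Z) = l Y + l Z) ->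
          (forall (f : R) Y, l (f *: Y) = f * l Y) ->
          exists X, forall Y, g X Y = l Y)) /\
     ((forall X Y, g (phiA X) (phiA Y) = phiS (g X Y)))).

Definition is_hom_Levi_Civita (k : numFieldType) (R : comAlgType k) (V : lmodType R)
  (phiS : R -> R) (phiA : V -> V) (br : V -> V -> V) (a : V -> R -> R)
  (g : V -> V -> R) (nabla : V -> V -> V) : Prop :=
  (((forall X, klinear (nabla X)) /\ (forall Y, klinear (fun X => nabla X Y))) /\
     ((forall (f : R) X Y, nabla (f *: X) Y = phiS f *: nabla X Y)) /\
     ((forall X (f : R) Y, nabla X (f *: Y) = phiS f *: nabla X Y + a (phiA X) f *: phiA Y)) /\
     ((forall X Y, br X Y = nabla X Y - nabla Y X)) /\
     ((forall X Y Z, a (phiA X) (g Y Z) = g (nabla X Y) (phiA Z) + g (phiA Y) (nabla X Z)))).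

Definition is_almost_para_complex (k : numFieldType) (R : comAlgType k) (V : lmodType R)
  (phiA : V -> V) (K : V -> V) : Prop :=
  ((bijective K) /\
     ((forall X, phiA (K (phiA (K X))) = X)) /\
     ((forall X, phiA (K X) = K (phiA X))) /\
     ((forall X Y, phiA (K (X + Y)) = phiA (K X) + phiA (K Y)) /\
      (forall (f : R) X, phiA (K (f *: X)) = f *: phiA (K X)))).

Definition is_almost_para_Hermitian (k : numFieldType) (R : comAlgType k) (V : lmodType R)
  (phiA : V -> V) (K : V -> V) (g : V -> V -> R) : Prop :=
  is_almost_para_complex phiA K /\
  (forall X Y, g (phiA (K X)) (phiA (K Y)) = - g X Y).

Definition is_para_Kahler (k : numFieldType) (R : comAlgType k) (V : lmodType R)
  (phiS : R -> R) (phiA : V -> V) (br : V -> V -> V) (a : V -> R -> R)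
  (K : V -> V) (g : V -> V -> R) (nabla : V -> V -> V) : Prop :=
  ((is_pullback phiS) /\
     (is_hom_Lie_algebroid phiS phiA br a) /\
     (is_pseudo_metric phiS phiA g) /\
     (is_hom_Levi_Civita phiS phiA br a g nabla) /\
     (is_almost_para_Hermitian phiA K g) /\
     ((forall X Y, nabla X (phiA (K Y)) = phiA (K (nabla X Y))))).

(* Gamma(A^1) and Gamma(A^{-1}) as predicates on Gamma(A) *)
Definition A1 (k : numFieldType) (R : comAlgType k) (V : lmodType R)
  (phiA K : V -> V) (X : V) : Prop := phiA (K X) = X.
Definition Am1 (k : numFieldType) (R : comAlgType k) (V : lmodType R)
  (phiA K : V -> V) (X : V) : Prop := phiA (K X) = - X.

(* Representation of the hom-Lie algebroid B = (P, phiB, brB, aB) (sections of B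
   are the X : V with P X, with the restricted structure) on the hom-bundle E
   (sections e : V with Q e) with respect to mu, given by X |-> rho X. *)
Definition is_representation (k : numFieldType) (R : comAlgType k) (V : lmodType R)
  (phiS : R -> R) (P : V -> Prop) (phiB : V -> V) (brB : V -> V -> V)
  (aB : V -> R -> R) (Q : V -> Prop) (mu : V -> V) (rho : V -> V -> V) : Prop :=
  ((
      (forall X e, P X -> Q e -> Q (rho X e))) /\
     ((forall X e e', P X -> Q e -> Q e' -> rho X (e + e') = rho X e + rho X e')) /\
     ((forall X (c : k) e, P X -> Q e -> rho X ((c%:A : R) *: e) = (c%:A : R) *: rho X e)) /\
     ((forall (f : R) X e, P X -> Q e -> rho (f *: X) e = phiS f *: rho X e)) /\
     ((forall X (f : R) e, P X -> Q e ->
          rho X (f *: e) = phiS f *: rho X e + aB (phiB X) f *: mu e)) /\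
     ((forall X e, P X -> Q e -> rho (phiB X) (mu e) = mu (rho X e))) /\
     ((forall X Y e, P X -> P Y -> Q e ->
          rho (brB X Y) (mu e) = rho (phiB X) (rho Y e) - rho (phiB Y) (rho X e)))).

From HB Require Import structures.
From mathcomp Require Import all_boot all_order all_algebra.
From mathcomp Require Import ring.
Set Implicit Arguments. Unset Strict Implicit. Unset Printing Implicit Defensive.
Import GRing.Theory Num.Theory.
Local Open Scope ring_scope.

(* The Koszul formula shows that the hom-Levi-Civita connection commutes with
   phi_A, and metric compatibility, torsion-freeness and the hom-Jacobi identity
   give the algebraic symmetries of its curvature
   R(X,Y)Z = nabla_{phi X} nabla_Y Z - nabla_{phi Y} nabla_X Z - nabla_{[X,Y]} phi Z:
   skew-symmetry in the last two slots and the first Bianchi identity.  On an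
   isotropic, parallel, phi_A-invariant subbundle these two symmetries force
   R = 0, which is exactly the missing axiom for nabla to be a representation.
   Both eigenbundles A^1 and A^{-1} of phi_A o K are such subbundles, because
   phi_A o K is parallel and anti-isometric. *)

Lemma morphD_oppr (U W : zmodType) (F : U -> W) :
  {morph F : x y / x + y} -> {morph F : x / - x}.
Proof.
move=> FD x; have F0 : F 0 = 0 by apply: (addrI (F 0)); rewrite -FD !addr0.
by apply/eqP; rewrite -addr_eq0 -FD addNr F0.
Qed.

Lemma morphD_subr (U W : zmodType) (F : U -> W) :
  {morph F : x y / x + y} -> {morph F : x y / x - y}.
Proof. by move=> FD x y; rewrite FD (morphD_oppr FD). Qed.

Lemma double_inj (k : numFieldType) (V : lmodType k) (x y : V) :
  x *+ 2 = y *+ 2 -> x = y.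
Proof.
have two_neq0 : (2%:R : k) != 0 by rewrite pnatr_eq0.
by move=> /(congr1 ( *:%R (2%:R : k)^-1)); rewrite -!scaler_nat !scalerA mulVf // !scale1r.
Qed.

Lemma eq_oppr_eq0 (k : numFieldType) (V : lmodType k) (x : V) : x = - x -> x = 0.
Proof.
move=> /eqP; rewrite -addr_eq0 => /eqP x2.
by apply: (double_inj (k := k)); rewrite mul0rn mulr2n.
Qed.

Section LeviCivita.

Variables (k : numFieldType) (R : comAlgType k) (V : lmodType R).
Variables (phiS : R -> R) (phiA : V -> V) (br : V -> V -> V) (a : V -> R -> R).
Variables (g : V -> V -> R) (nabla : V -> V -> V).

Hypothesis phiS_add : {morph phiS : f h / f + h}.
Hypothesis HA : is_hom_Lie_algebroid phiS phiA br a.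
Hypothesis Hg : is_pseudo_metric phiS phiA g.
Hypothesis HLC : is_hom_Levi_Civita phiS phiA br a g nabla.

Lemma phiA_surj Z : exists W, Z = phiA W.
Proof. by have [[[phiA' _ phiAK] _] _] := HA; exists (phiA' Z); rewrite phiAK. Qed.

Lemma phiA_br X Y : phiA (br X Y) = br (phiA X) (phiA Y).
Proof. by have [_ [_ [_ [->]]]] := HA. Qed.

Lemma br_Jacobi X Y Z :
  br (phiA X) (br Y Z) + br (phiA Y) (br Z X) + br (phiA Z) (br X Y) = 0.
Proof. by have [_ [_ [_ [_ [->]]]]] := HA. Qed.

Lemma anchorD X : {morph a X : f h / f + h}.
Proof. by have [_ [_ [_ [_ [_ [[_ [_ aX]] _]]]]]] := HA; have [] := aX X. Qed.

Lemma anchor_phiA X f : phiS (a X f) = a (phiA X) (phiS f).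
Proof. by have [_ [_ [_ [_ [_ [_ [_ [->]]]]]]]] := HA. Qed.

Lemma anchor_br X Y f :
  a (br X Y) (phiS f) = a (phiA X) (a Y f) - a (phiA Y) (a X f).
Proof. by have [_ [_ [_ [_ [_ [_ [_ [_ ->]]]]]]]] := HA. Qed.

Lemma gDl X Z Y : g (X + Z) Y = g X Y + g Z Y.
Proof. by have [gD _] := Hg. Qed.

Lemma gNl X Y : g (- X) Y = - g X Y.
Proof. exact: morphD_oppr (fun X1 X2 => gDl X1 X2 Y) X. Qed.

Lemma gBl X Z Y : g (X - Z) Y = g X Y - g Z Y.
Proof. exact: morphD_subr (fun X1 X2 => gDl X1 X2 Y) X Z. Qed.

Lemma g0l Y : g 0 Y = 0.
Proof. by rewrite -(subrr 0) gBl subrr. Qed.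

Lemma gC X Y : g X Y = g Y X.
Proof. by have [_ [_ [->]]] := Hg. Qed.

Lemma g_phiA X Y : g (phiA X) (phiA Y) = phiS (g X Y).
Proof. by have [_ [_ [_ [_ [_ ->]]]]] := Hg. Qed.

Lemma eq_of_g_phiA2 X Y :
  (forall W, g X (phiA (phiA W)) = g Y (phiA (phiA W))) -> X = Y.
Proof.
have [_ [_ [_ [g_nondeg _]]]] := Hg.
move=> eqXY; apply/eqP; rewrite -subr_eq0; apply/eqP/g_nondeg => Z.
have [W1 ->] := phiA_surj Z; have [W ->] := phiA_surj W1.
by rewrite gBl eqXY subrr.
Qed.

Lemma nablaDr U : {morph nabla U : X Y / X + Y}.
Proof. by have [[nablaU _] _] := HLC; have [] := nablaU U. Qed.

Lemma nablaBr U X Y : nabla U (X - Y) = nabla U X - nabla U Y.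
Proof. exact: morphD_subr (nablaDr U) X Y. Qed.

Lemma nabla_torsion_free X Y : br X Y = nabla X Y - nabla Y X.
Proof. by have [_ [_ [_ [->]]]] := HLC. Qed.

Lemma nabla_metric X Y Z :
  a (phiA X) (g Y Z) = g (nabla X Y) (phiA Z) + g (phiA Y) (nabla X Z).
Proof. by have [_ [_ [_ [_ ->]]]] := HLC. Qed.

Definition koszul X Y Z :=
  a (phiA X) (g Y Z) + a (phiA Y) (g X Z) - a (phiA Z) (g X Y)
  + g (br X Y) (phiA Z) - g (br X Z) (phiA Y) - g (br Y Z) (phiA X).

Lemma koszul_formula X Y Z : g (nabla X Y) (phiA Z) *+ 2 = koszul X Y Z.
Proof.
pose c X Y Z := g (nabla X Y) (phiA Z).
have metric X' Y' Z' : a (phiA X') (g Y' Z') = c X' Y' Z' + c X' Z' Y'.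
  by rewrite nabla_metric (gC (phiA Y')).
have torsion X' Y' Z' : g (br X' Y') (phiA Z') = c X' Y' Z' - c Y' X' Z'.
  by rewrite nabla_torsion_free gBl.
by rewrite /koszul !metric !torsion -/(c X Y Z) mulr2n; ring.
Qed.

Lemma koszul_phiA X Y Z : phiS (koszul X Y Z) = koszul (phiA X) (phiA Y) (phiA Z).
Proof.
rewrite /koszul !(phiS_add, morphD_oppr phiS_add) !anchor_phiA.
by rewrite -!g_phiA !phiA_br.
Qed.

Lemma nabla_phiA X Y : nabla (phiA X) (phiA Y) = phiA (nabla X Y).
Proof.
apply: eq_of_g_phiA2 => W; apply: (double_inj (k := k)).
rewrite koszul_formula -koszul_phiA -koszul_formula g_phiA.
by rewrite !mulr2n phiS_add.
Qed.

Definition curvature X Y Z :=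
  nabla (phiA X) (nabla Y Z) - nabla (phiA Y) (nabla X Z) - nabla (br X Y) (phiA Z).

Lemma curvature_skew X Y Z W :
  g (curvature X Y Z) (phiA (phiA W)) + g (curvature X Y W) (phiA (phiA Z)) = 0.
Proof.
have second_derivative X' Y' : a (phiA (phiA X')) (a (phiA Y') (g Z W)) =
    g (nabla (phiA X') (nabla Y' Z)) (phiA (phiA W))
    + g (phiA (nabla Y' Z)) (phiA (nabla X' W))
    + (g (phiA (nabla X' Z)) (phiA (nabla Y' W))
       + g (nabla (phiA X') (nabla Y' W)) (phiA (phiA Z))).
  by rewrite nabla_metric anchorD !nabla_metric !nabla_phiA (gC (phiA (phiA Z))).
have bracket_derivative : a (br (phiA X) (phiA Y)) (phiS (g Z W)) =
    g (nabla (br X Y) (phiA Z)) (phiA (phiA W))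
    + g (nabla (br X Y) (phiA W)) (phiA (phiA Z)).
  by rewrite -phiA_br -g_phiA nabla_metric (gC (phiA (phiA Z))).
have := anchor_br (phiA X) (phiA Y) (g Z W).
rewrite bracket_derivative !second_derivative /curvature !gBl => /eqP.
by rewrite -subr_eq0 => /eqP bracket; rewrite -[RHS]oppr0 -bracket; ring.
Qed.

Lemma curvature_Bianchi X Y Z T :
  g (curvature X Y Z) T + g (curvature Y Z X) T + g (curvature Z X Y) T = 0.
Proof.
rewrite -(g0l T) -(br_Jacobi X Y Z) /curvature !nabla_torsion_free !nablaBr.
by rewrite !(gDl, gNl); ring.
Qed.

Section IsotropicParallel.

Variable P : V -> Prop.
Hypothesis P_parallel : forall U S, P S -> P (nabla U S).
Hypothesis P_phiA : forall S, P S -> P (phiA S).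
Hypothesis P_sub : forall S T, P S -> P T -> P (S - T).
Hypothesis P_isotropic : forall S T, P S -> P T -> g S T = 0.

Lemma curvature_isotropic_parallel X Y Z : P X -> P Y -> P Z -> curvature X Y Z = 0.
Proof.
have P_curvature U W T : P T -> P (curvature U W T).
  by move=> PT; rewrite /curvature; auto.
move=> PX PY PZ; apply: eq_of_g_phiA2 => W; rewrite g0l.
have PZ2 : P (phiA (phiA Z)) by auto.
have R_XYW_Z : g (curvature X Y W) (phiA (phiA Z)) = 0.
  have := curvature_Bianchi X Y W (phiA (phiA Z)).
  rewrite (P_isotropic (P_curvature _ _ _ PX) PZ2).
  by rewrite (P_isotropic (P_curvature _ _ _ PY) PZ2) !addr0.
by have := curvature_skew X Y Z W; rewrite R_XYW_Z addr0.
Qed.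

Lemma representation_isotropic_parallel :
  is_representation phiS P phiA br a P phiA nabla.
Proof.
have [[nabla_klinear _] [nablaZl [nabla_Leibniz _]]] := HLC.
do ![split] => [X e _|X e e' _ _ _|X c e _ _|f X e _ _|X f e _ _|X e _ _|X Y e PX PY Pe].
- exact: P_parallel.
- exact: nablaDr.
- by have [_ ->] := nabla_klinear X.
- exact: nablaZl.
- exact: nabla_Leibniz.
- exact: nabla_phiA.
- have := curvature_isotropic_parallel PX PY Pe.
  by rewrite /curvature => /eqP; rewrite subr_eq0 => /eqP.
Qed.

End IsotropicParallel.

End LeviCivita.

Section ParaKahler.

Variables (k : numFieldType) (R : comAlgType k) (V : lmodType R).
Variables (phiS : R -> R) (phiA K : V -> V) (g : V -> V -> R) (nabla : V -> V -> V).

Hypothesis phiA_add : {morph phiA : X Y / X + Y}.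
Hypothesis Hg : is_pseudo_metric phiS phiA g.
Hypothesis HJ : is_almost_para_Hermitian phiA K g.
Hypothesis nabla_additive : forall U, {morph nabla U : X Y / X + Y}.
Hypothesis nabla_J : forall X Y, nabla X (phiA (K Y)) = phiA (K (nabla X Y)).

Lemma phiA_K_commute X : phiA (K X) = K (phiA X).
Proof. by have [[_ [_ [->]]] _] := HJ. Qed.

Lemma phiA_K_subr X Y : phiA (K (X - Y)) = phiA (K X) - phiA (K Y).
Proof. by have [[_ [_ [_ [JD _]]]] _] := HJ; exact: morphD_subr JD X Y. Qed.

Lemma g_phiA_K X Y : g (phiA (K X)) (phiA (K Y)) = - g X Y.
Proof. by have [_ ->] := HJ. Qed.

Lemma A1_parallel U S : A1 phiA K S -> A1 phiA K (nabla U S).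
Proof. by rewrite /A1 -nabla_J => ->. Qed.

Lemma A1_phiA S : A1 phiA K S -> A1 phiA K (phiA S).
Proof. by rewrite /A1 -phiA_K_commute => ->. Qed.

Lemma A1_subr S T : A1 phiA K S -> A1 phiA K T -> A1 phiA K (S - T).
Proof. by rewrite /A1 phiA_K_subr => -> ->. Qed.

Lemma A1_isotropic S T : A1 phiA K S -> A1 phiA K T -> g S T = 0.
Proof. by move=> JS JT; apply: (eq_oppr_eq0 (k := k)); rewrite -g_phiA_K JS JT. Qed.

Lemma Am1_parallel U S : Am1 phiA K S -> Am1 phiA K (nabla U S).
Proof. by rewrite /Am1 -nabla_J => ->; exact: (morphD_oppr (nabla_additive U)). Qed.

Lemma Am1_phiA S : Am1 phiA K S -> Am1 phiA K (phiA S).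
Proof. by rewrite /Am1 -phiA_K_commute => ->; exact: (morphD_oppr phiA_add). Qed.

Lemma Am1_subr S T : Am1 phiA K S -> Am1 phiA K T -> Am1 phiA K (S - T).
Proof. by rewrite /Am1 phiA_K_subr => -> ->; rewrite opprB opprK addrC. Qed.

Lemma Am1_isotropic S T : Am1 phiA K S -> Am1 phiA K T -> g S T = 0.
Proof.
move=> JS JT; apply: (eq_oppr_eq0 (k := k)).
by rewrite -g_phiA_K JS JT (gNl Hg) (gC Hg S (- T)) (gNl Hg) opprK (gC Hg T).
Qed.

End ParaKahler.

Theorem mainTheorem8 (k : numFieldType) (R : comAlgType k) (V : lmodType R)
  (phiS : R -> R) (phiA : V -> V) (br : V -> V -> V) (a : V -> R -> R)
  (K : V -> V) (g : V -> V -> R) (nabla : V -> V -> V) :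
  is_para_Kahler phiS phiA br a K g nabla ->
  is_representation phiS (A1 phiA K) phiA br a (A1 phiA K) phiA nabla /\
  is_representation phiS (Am1 phiA K) phiA br a (Am1 phiA K) phiA nabla.
Proof.
move=> [[phiS_add _] [HA [Hg [HLC [HJ nabla_J]]]]].
have phiA_add : {morph phiA : X Y / X + Y} by have [[_ [[]]]] := HA.
split; apply: (representation_isotropic_parallel phiS_add HA Hg HLC).
- exact: A1_parallel nabla_J.
- exact: A1_phiA HJ.
- exact: A1_subr HJ.
- exact: A1_isotropic HJ.
- exact: Am1_parallel (nablaDr HLC) nabla_J.
- exact: Am1_phiA phiA_add HJ.
- exact: Am1_subr HJ.
- exact: Am1_isotropic Hg HJ.
Qed.
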